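(* Let $T$ be a spherically homogeneous rooted tree in which every vertex has at least $2$ children, and let $G\le\mathrm{Aut}~T$ be a just-infinite branch group. Then $G$ has property $\mathrm{(VRC)}$ if and only if $G$ is torsion.
   Context: $\mathrm{Aut}~T$ is the group of automorphisms of $T$ fixing the root; $\mathcal{L}_n$ is the $n$th level; $T_v$ is the subtree of descendants of $v$. For $G\le\mathrm{Aut}~T$, $\mathrm{rist}_G(v)$ is the subgroup of elements of $G$ fixing every vertex outside $T_v$, and $\mathrm{Rist}_G(n)=\prod_{v\in\mathcal{L}_n}\mathrm{rist}_G(v)$. $G$ is branch if it acts transitively on every level and each $\mathrm{Rist}_G(n)$ has finite index in $G$. A group is just-infinite if it is infinite and every non-trivial normal subgroup has finite index. $H\le G$ is a virtual retract of $G$ if there is a finite-index $K\le G$ containing $H$ and a homomorphism $K\to H$ restricting to the identity on $H$. $G$ has property $\mathrm{(VRC)}$ if every cyclic subgroup of $G$ is a virtual retract of $G$. $G$ is torsion if every element has finite order. *)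

From Stdlib Require List.
From mathcomp Require Import all_boot.

Set Implicit Arguments.
Unset Strict Implicit.
Unset Printing Implicit Defensive.

(* The spherically homogeneous rooted tree with branching sequence m:
   vertices of level n are the words v of length n with v_i < m i;
   the root is the empty word, the children of v are rcons v a (a < m (size v)). *)
Definition vertex (m : nat -> nat) (v : seq nat) : Prop :=
  forall i, i < size v -> nth 0 v i < m i.

(* u is a prefix of w, i.e. w lies in the subtree T_u *)
Definition prefix (u w : seq nat) : Prop := take (size u) w = u.

(* Tree maps: functions on words; automorphisms act as the identity off the tree
   (so that automorphisms are determined extensionally by their action on T). *)
Definition aut := seq nat -> seq nat.

Definition mulf (f g : aut) : aut := fun v => f (g v).
Definition idf : aut := fun v => v.

Definition is_aut (m : nat -> nat) (f : aut) : Prop :=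
  [/\ (forall v, ~ vertex m v -> f v = v),
      (forall v, vertex m v -> vertex m (f v)),
      (forall v, size (f v) = size v),
      (forall v k, vertex m v -> f (take k v) = take k (f v)) &
      (injective f /\
       forall w, vertex m w -> exists v, vertex m v /\ f v = w)].

Definition subgroup_of (A H : aut -> Prop) : Prop :=
  [/\ (forall h, H h -> A h),
      H idf,
      (forall x y, H x -> H y -> H (mulf x y)) &
      (forall h, H h -> exists h', [/\ H h', mulf h h' = idf & mulf h' h = idf])].

Definition generated (G S : aut -> Prop) : aut -> Prop :=
  fun x => forall H, subgroup_of G H -> (forall s, S s -> H s) -> H x.

Definition finite_set (G : aut -> Prop) : Prop :=
  exists s : list aut, forall g, G g -> List.In g s.

Definition finite_index (G H : aut -> Prop) : Prop :=
  exists s : list aut, forall g, G g ->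
    exists2 x, List.In x s & exists h, H h /\ g = mulf x h.

Definition normal_in (G N : aut -> Prop) : Prop :=
  subgroup_of G N /\
  forall g gi n, G g -> mulf g gi = idf -> mulf gi g = idf -> N n ->
    N (mulf g (mulf n gi)).

Definition just_infinite (G : aut -> Prop) : Prop :=
  ~ finite_set G /\
  forall N, normal_in G N -> (exists n, N n /\ n <> idf) -> finite_index G N.

Definition rist (m : nat -> nat) (G : aut -> Prop) (v : seq nat) : aut -> Prop :=
  fun g => G g /\ forall w, vertex m w -> ~ prefix v w -> g w = w.

(* Rist_G(n): the (internal direct) product of the rist_G(v), v in level n,
   i.e. the subgroup they generate *)
Definition Rist (m : nat -> nat) (G : aut -> Prop) (n : nat) : aut -> Prop :=
  generated G (fun g => exists v, [/\ vertex m v, size v = n & rist m G v g]).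

Definition branch (m : nat -> nat) (G : aut -> Prop) : Prop :=
  (forall u v, vertex m u -> vertex m v -> size u = size v ->
     exists g, G g /\ g u = v) /\
  (forall n, finite_index G (Rist m G n)).

Definition virtual_retract (G H : aut -> Prop) : Prop :=
  exists K, [/\ subgroup_of G K, finite_index G K, (forall h, H h -> K h) &
    exists rho : aut -> aut,
      [/\ (forall k, K k -> H (rho k)),
          (forall x y, K x -> K y -> rho (mulf x y) = mulf (rho x) (rho y)) &
          (forall h, H h -> rho h = h)]].

Definition cyclic_sub (G : aut -> Prop) (g : aut) : aut -> Prop :=
  generated G (fun x => x = g).

Definition VRC (G : aut -> Prop) : Prop :=
  forall g, G g -> virtual_retract G (cyclic_sub G g).

Definition torsion (G : aut -> Prop) : Prop :=
  forall g, G g -> exists n, 0 < n /\ iter n (mulf g) idf = idf.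

(* If g has finite order, there is a level L of T on which every nontrivial power of g acts
   nontrivially; the elements of G acting on L as a power of g form a subgroup containing
   the level stabilizer, hence of finite index, and reading off that power retracts it onto <g>.

   Conversely, let g have infinite order and rho : K -> <g> be a retraction, K of finite index.
   If the normal core of ker rho were nontrivial it would have finite index in the just-infinite
   G, so it would contain some g^d, d > 0, which rho both kills and fixes. Hence it is trivial,
   and as <g> is abelian all commutators of the normal core of K lie in it: that core is an
   abelian normal subgroup, and it contains a nontrivial power of g. But an infinite branch group
   has no such subgroup: if a in it moves w, every b in rist(w) agrees on T_w with the element
   [b, a] of it, so rist(w) is abelian; yet a nontrivial c in rist(w) moving some u would then
   commute with a nontrivial d in rist(u), so d would lie in rist(u) and rist(c u) at once. *)

From mathcomp Require Import all_boot.
(* Imported after all_boot so that [prefix] is the tree prefix of Defs, not seq.prefix. *)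
From Pilot Require Import Defs.
From Stdlib Require Import Classical ClassicalEpsilon FunctionalExtensionality.
From Stdlib Require List.

Set Implicit Arguments.
Unset Strict Implicit.
Unset Printing Implicit Defensive.

Definition powf (x : aut) n : aut := iter n (mulf x) idf.

Lemma powfS x n : powf x n.+1 = mulf x (powf x n). Proof. by []. Qed.

Lemma powfD x a b : powf x (a + b) = mulf (powf x a) (powf x b).
Proof. by elim: a => [|a IH] //; rewrite addSn powfS IH. Qed.

Lemma powf_idf n : powf idf n = idf.
Proof. by elim: n => [|n IH] //; rewrite powfS IH. Qed.

Lemma powfM x a b : powf x (a * b) = powf (powf x a) b.
Proof. by elim: b => [|b IH]; rewrite ?muln0 // mulnS powfD IH. Qed.

Lemma powfC x a b : mulf (powf x a) (powf x b) = mulf (powf x b) (powf x a).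
Proof. by rewrite -!powfD addnC. Qed.

Lemma powf_mod x n a : powf x n = idf -> powf x a = powf x (a %% n).
Proof. by move=> xn; rewrite {1}(divn_eq a n) powfD mulnC powfM xn powf_idf. Qed.

Lemma powf_mulV x n i : 0 < n -> powf x n = idf ->
  mulf (powf x i) (powf x (i * n.-1)) = idf.
Proof.
move=> n_gt0 xn; rewrite -powfD.
have -> : i + i * n.-1 = i * n by rewrite -{1}[i]muln1 -mulnDr add1n prednK.
by rewrite mulnC powfM xn powf_idf.
Qed.

Lemma mulf_idf_cancel (f g : aut) : mulf f g = idf -> cancel g f.
Proof. by move=> fg v; have := equal_f fg v. Qed.

(* Conjugation by y, given an inverse yi of y: [aut] carries no inverse operation. *)
Definition cnj (y yi x : aut) : aut := mulf y (mulf x yi).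

Lemma cnj_idf y yi : mulf y yi = idf -> cnj y yi idf = idf. Proof. by []. Qed.

Lemma cnjM y yi x1 x2 : mulf yi y = idf ->
  cnj y yi (mulf x1 x2) = mulf (cnj y yi x1) (cnj y yi x2).
Proof.
by move=> yiy; apply: functional_extensionality => v; rewrite /cnj /mulf (mulf_idf_cancel yiy).
Qed.

Lemma cnj_powf y yi x n : mulf y yi = idf -> mulf yi y = idf ->
  powf (cnj y yi x) n = cnj y yi (powf x n).
Proof.
move=> yyi yiy; elim: n => [|n IH]; first by rewrite -[RHS]/(mulf y yi) yyi.
by rewrite powfS IH -cnjM.
Qed.

Section Subgroups.

Variables (A H : aut -> Prop).
Hypothesis sH : subgroup_of A H.

Lemma subg_sub h : H h -> A h. Proof. by case: sH => sub _ _ _; apply: sub. Qed.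
Lemma subg1 : H idf. Proof. by case: sH. Qed.
Lemma subgM x y : H x -> H y -> H (mulf x y). Proof. by case: sH => _ _ M _; apply: M. Qed.
Lemma subgV h : H h -> exists h', [/\ H h', mulf h h' = idf & mulf h' h = idf].
Proof. by case: sH => _ _ _ V; apply: V. Qed.

Lemma subgX x n : H x -> H (powf x n).
Proof. by move=> Hx; elim: n => [|n IH]; [exact: subg1 | exact: subgM]. Qed.

Lemma subgVr h h' : H h -> mulf h h' = idf -> H h'.
Proof.
move=> Hh hh'; have [h'' [Hh'' _ h''h]] := subgV Hh.
have -> : h' = h''.
  apply: functional_extensionality => v.
  by rewrite -(mulf_idf_cancel h''h (h' v)) (mulf_idf_cancel hh').
exact: Hh''.
Qed.

End Subgroups.

Lemma prefix_size u w : prefix u w -> size u <= size w.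
Proof. by rewrite /prefix => <-; rewrite size_take; case: ltnP => // /ltnW. Qed.

Lemma prefix_refl u : prefix u u. Proof. exact: take_size. Qed.

Lemma prefix_trans u v w : prefix u v -> prefix v w -> prefix u w.
Proof.
move=> uv vw; have := prefix_size uv; move: uv vw; rewrite /prefix => uv vw uv_le.
by rewrite -[in RHS]uv -vw take_takel.
Qed.

Lemma eq_prefix_size u1 u2 w : size u1 = size u2 -> prefix u1 w -> prefix u2 w -> u1 = u2.
Proof. by rewrite /prefix => eq_size <- <-; rewrite eq_size. Qed.

Section Automorphism.

Variables (m : nat -> nat) (f : aut).
Hypothesis af : is_aut m f.

Lemma aut_fix v : ~ vertex m v -> f v = v. Proof. by case: af => af_fix _ _ _ _; apply: af_fix. Qed.
Lemma aut_vertex v : vertex m v -> vertex m (f v). Proof. by case: af => _ vf _ _ _; apply: vf. Qed.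
Lemma aut_size v : size (f v) = size v. Proof. by case: af => _ _ sf _ _. Qed.
Lemma aut_take v k : vertex m v -> f (take k v) = take k (f v).
Proof. by case: af => _ _ _ tf _; apply: tf. Qed.
Lemma aut_inj : injective f. Proof. by case: af => _ _ _ _ []. Qed.

Lemma aut_prefixE u w : vertex m w -> prefix (f u) (f w) <-> prefix u w.
Proof.
rewrite /prefix aut_size => vw; rewrite -aut_take //.
by split=> [/aut_inj | ->].
Qed.

Lemma aut_moves : f <> idf -> exists v, vertex m v /\ f v <> v.
Proof.
move=> f_neq1; apply: NNPP => fixes; apply: f_neq1.
apply: functional_extensionality => v; case: (classic (vertex m v)) => [vv|]; last exact: aut_fix.
by apply: NNPP => fv; apply: fixes; exists v.
Qed.

End Automorphism.

Section RigidStabilizers.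

Variables (m : nat -> nat) (G : aut -> Prop).
Hypothesis sG : subgroup_of (is_aut m) G.

Let mem_aut g : G g -> is_aut m g := @subg_sub _ _ sG g.

Lemma rist_fix_root u c : vertex m u -> rist m G u c -> c u = u.
Proof.
move=> vu [Gc c_supp]; have ac := mem_aut Gc; apply: NNPP => cu.
have : c (c u) = c u.
  apply: c_supp; first exact: aut_vertex.
  by move=> u_cu; apply: cu; apply: (eq_prefix_size (aut_size ac u)) u_cu; exact: prefix_refl.
by move/(aut_inj ac).
Qed.

Lemma rist_prefix u w c : prefix w u -> rist m G u c -> rist m G w c.
Proof. by move=> wu [Gc c_supp]; split=> // z vz wz; apply: c_supp => // /(prefix_trans wu). Qed.

Lemma rist_cnj u y yi c : G y -> mulf y yi = idf -> mulf yi y = idf ->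
  rist m G u c -> rist m G (y u) (cnj y yi c).
Proof.
move=> Gy yyi yiy [Gc c_supp]; have Gyi := subgVr sG Gy yyi.
split; first exact: (subgM sG Gy (subgM sG Gc Gyi)).
move=> z vz yu_z; have vyiz := aut_vertex (mem_aut Gyi) vz.
rewrite /cnj /mulf c_supp ?(mulf_idf_cancel yyi) //.
by rewrite -(aut_prefixE (mem_aut Gy)) ?(mulf_idf_cancel yyi).
Qed.

Lemma ristVr u c c' : vertex m u -> mulf c c' = idf -> rist m G u c -> rist m G u c'.
Proof.
move=> vu cc' rc; have [Gc c_supp] := rc; have Gc' := subgVr sG Gc cc'.
split=> // z vz uz; have vc'z := aut_vertex (mem_aut Gc') vz.
case: (classic (prefix u (c' z))) => [u_c'z | /c_supp c'zE]; last first.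
  by rewrite -{2}(mulf_idf_cancel cc' z) c'zE.
case: uz; rewrite -(mulf_idf_cancel cc' z) -(rist_fix_root vu rc).
by rewrite (aut_prefixE (mem_aut Gc)).
Qed.

Lemma rist_disjoint u1 u2 d : vertex m u1 -> size u1 = size u2 -> u1 <> u2 ->
  rist m G u1 d -> rist m G u2 d -> d = idf.
Proof.
move=> vu1 size_u u1_neq_u2 [Gd d_supp1] [_ d_supp2]; apply: functional_extensionality => z.
case: (classic (vertex m z)) => [vz|]; last exact: (aut_fix (mem_aut Gd)).
case: (classic (prefix u1 z)) => [u1z|]; last exact: d_supp1.
by apply: d_supp2 => // u2z; exact: (u1_neq_u2 (eq_prefix_size size_u u1z u2z)).
Qed.

Lemma rist_nontrivial u : branch m G -> ~ finite_set G -> vertex m u ->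
  exists c, rist m G u c /\ c <> idf.
Proof.
move=> [transG RistG] G_infinite vu; apply: NNPP => rist_u_trivial.
have rist_level_trivial v c : vertex m v -> size v = size u -> rist m G v c -> c = idf.
  move=> vv size_v rc; apply: NNPP => c_neq1.
  have [y [Gy yv]] := transG v u vv vu size_v.
  have [yi [Gyi yyi yiy]] := subgV sG Gy.
  apply: rist_u_trivial; exists (cnj y yi c); split; first by rewrite -yv; exact: rist_cnj.
  move=> cnj_c1; apply: c_neq1; apply: functional_extensionality => z.
  have := equal_f cnj_c1 (y z); rewrite /cnj /mulf (mulf_idf_cancel yiy).
  exact: (aut_inj (mem_aut Gy)).
have trivial_subgroup : subgroup_of G (eq idf).
  by split=> [_ <-|//|_ _ <- <-|_ <-]; [exact: subg1 sG | | exists idf].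
have [s cosets] := RistG (size u); apply: G_infinite; exists s => g Gg.
have [x sx [h [Rh ->]]] := cosets g Gg.
suff <- : idf = h by [].
apply: (Rh (eq idf) trivial_subgroup) => c [v [vv size_v /rist_level_trivial]].
by move=> /(_ vv size_v) ->.
Qed.

Variable A : aut -> Prop.
Hypothesis A_normal : normal_in G A.

Let sA : subgroup_of G A := proj1 A_normal.
Let A_cnj g gi a : G g -> mulf g gi = idf -> mulf gi g = idf -> A a -> A (cnj g gi a)
  := proj2 A_normal g gi a.

(* [b a b^-1 a^-1] lies in A, and on T_w it acts as b because [a^-1] moves T_w off itself. *)
Lemma rist_agrees_normal w a b : vertex m w -> A a -> a w <> w -> rist m G w b ->
  exists e, A e /\ forall z, vertex m z -> prefix w z -> e z = b z.
Proof.
move=> vw Aa aw rb; have [Gb _] := rb; have Ga := subg_sub sA Aa.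
have [b' [Gb' bb' b'b]] := subgV sG Gb; have [a' [Aa' aa' a'a]] := subgV sA Aa.
have rb' := ristVr vw bb' rb.
exists (mulf (cnj b b' a) a'); split; first exact: (subgM sA (A_cnj Gb bb' b'b Aa) Aa').
move=> z vz wz; have va'z := aut_vertex (mem_aut (subg_sub sA Aa')) vz.
rewrite /cnj /mulf (proj2 rb' (a' z)) ?(mulf_idf_cancel aa') // => w_a'z.
apply: aw; apply: (eq_prefix_size (aut_size (mem_aut Ga) w)) wz.
by rewrite -(mulf_idf_cancel aa' z) (aut_prefixE (mem_aut Ga)).
Qed.

Hypothesis A_abelian : forall x y, A x -> A y -> mulf x y = mulf y x.

Lemma rist_commute w a b1 b2 : vertex m w -> A a -> a w <> w ->
  rist m G w b1 -> rist m G w b2 -> mulf b1 b2 = mulf b2 b1.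
Proof.
move=> vw Aa aw rb1 rb2.
have [[Gb1 b1_supp] [Gb2 b2_supp]] := (rb1, rb2).
have [e1 [Ae1 e1E]] := rist_agrees_normal vw Aa aw rb1.
have [e2 [Ae2 e2E]] := rist_agrees_normal vw Aa aw rb2.
apply: functional_extensionality => z; rewrite /mulf.
case: (classic (vertex m z)) => [vz|nvz]; last first.
  by rewrite !(aut_fix (mem_aut Gb1) nvz, aut_fix (mem_aut Gb2) nvz).
case: (classic (prefix w z)) => [wz|nwz]; last by rewrite !(b1_supp z vz nwz, b2_supp z vz nwz).
have stays g : rist m G w g -> prefix w (g z) /\ vertex m (g z).
  move=> rg; split; last exact: (aut_vertex (mem_aut (proj1 rg)) vz).
  by rewrite -(rist_fix_root vw rg) (aut_prefixE (mem_aut (proj1 rg))).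
have [[w_b1z vb1z] [w_b2z vb2z]] := (stays _ rb1, stays _ rb2).
rewrite -(e1E (b2 z)) // -(e2E z) // -(e2E (b1 z)) // -(e1E z) //.
exact: (equal_f (A_abelian Ae1 Ae2) z).
Qed.

Lemma branch_abelian_normal_trivial a : branch m G -> ~ finite_set G -> A a -> a = idf.
Proof.
move=> branchG G_infinite Aa; apply: NNPP => a_neq1.
have [w [vw aw]] := aut_moves (mem_aut (subg_sub sA Aa)) a_neq1.
have [c [rc c_neq1]] := rist_nontrivial branchG G_infinite vw.
have [Gc c_supp] := rc; have ac := mem_aut Gc.
have [u [vu cu]] := aut_moves ac c_neq1.
have wu : prefix w u by apply: NNPP => /(c_supp u vu).
have [d [rd d_neq1]] := rist_nontrivial branchG G_infinite vu.
have [c' [Gc' cc' c'c]] := subgV sG Gc.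
have cd_comm := rist_commute vw Aa aw rc (rist_prefix wu rd).
have cnj_d : cnj c c' d = d.
  apply: functional_extensionality => z.
  by rewrite /cnj -[mulf c _]/(mulf (mulf c d) c') cd_comm /mulf (mulf_idf_cancel cc').
apply: d_neq1; apply: (rist_disjoint vu (esym (aut_size ac u)) (nesym cu) rd).
by rewrite -cnj_d; exact: rist_cnj.
Qed.

End RigidStabilizers.

Lemma pigeonhole_nat r (f : nat -> nat) : (forall j, j <= r -> f j < r) ->
  exists a b, [/\ a < b, b <= r & f a = f b].
Proof.
move=> f_lt; apply: NNPP => no_collision.
have f_inj : {in iota 0 r.+1 &, injective f}.
  move=> a b; rewrite !mem_iota !add0n => a_le b_le fab.
  apply: NNPP => a_neq_b; apply: no_collision.
  by case: (ltngtP a b) a_neq_b => // [ab|ba] _; [exists a, b | exists b, a].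
have f_range : {subset map f (iota 0 r.+1) <= iota 0 r}.
  by move=> y /mapP [j]; rewrite !mem_iota !add0n /= => j_le ->; apply: f_lt.
have := uniq_leq_size _ f_range; rewrite map_inj_in_uniq // iota_uniq size_map !size_iota.
by move/(_ isT); rewrite ltnn.
Qed.

Lemma finite_index_power m G L s x : subgroup_of (is_aut m) G -> subgroup_of G L ->
  (forall g, G g -> exists2 y, List.In y s & exists h, L h /\ g = mulf y h) ->
  G x -> exists d, [/\ 0 < d, d <= size s & L (powf x d)].
Proof.
move=> sG sL cosets Gx.
pose coset j i := i < size s /\ exists h, L h /\ powf x j = mulf (List.nth i s idf) h.
have coset_ex j : exists i, coset j i.
  have [y sy [h [Lh xjE]]] := cosets _ (subgX sG j Gx).
  have [i [/ltP i_lt yE]] := List.In_nth s y idf sy.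
  by exists i; split=> //; exists h; rewrite yE.
pose f j := epsilon (inhabits 0) (coset j).
have f_spec j : coset j (f j) := epsilon_spec (inhabits 0) (coset j) (coset_ex j).
have [a [b [ab b_le fab]]] := pigeonhole_nat (fun j _ => proj1 (f_spec j)).
have [[_ [ha [Lha xaE]]] [_ [hb [Lhb xbE]]]] := (f_spec a, f_spec b).
have [ha' [Lha' haha' _]] := subgV sL Lha.
exists (b - a); split; [by rewrite subn_gt0 | exact: leq_trans (leq_subr a b) b_le |].
suff -> : powf x (b - a) = mulf ha' hb by exact: (subgM sL Lha' Lhb).
apply: functional_extensionality => v; apply: (aut_inj (subg_sub sG (subgX sG a Gx))).
change (mulf (powf x a) (powf x (b - a)) v = powf x a (mulf ha' hb v)).
by rewrite -(powfD x a (b - a)) (subnKC (ltnW ab)) xbE xaE -fab /mulf (mulf_idf_cancel haha').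
Qed.

Definition core (G K : aut -> Prop) : aut -> Prop :=
  fun x => G x /\ forall y yi, G y -> mulf y yi = idf -> mulf yi y = idf -> K (cnj y yi x).

Definition kernel (K : aut -> Prop) (rho : aut -> aut) : aut -> Prop :=
  fun x => K x /\ rho x = idf.

Section NormalCore.

Variables (A G K : aut -> Prop).
Hypotheses (sG : subgroup_of A G) (sK : subgroup_of G K).

Lemma core_sub x : core G K x -> K x.
Proof. by case=> _ /(_ idf idf (subg1 sG) erefl erefl). Qed.

Lemma core_normal : normal_in G (core G K).
Proof.
split; first split.
- by move=> x [].
- split=> [|y yi _ yyi _]; first exact: (subg1 sG).
  by rewrite cnj_idf //; exact: (subg1 sK).
- move=> x1 x2 [Gx1 Kx1] [Gx2 Kx2]; split; first exact: (subgM sG).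
  by move=> y yi Gy yyi yiy; rewrite (cnjM x1 x2 yiy); apply: (subgM sK); [apply: Kx1 | apply: Kx2].
- move=> x [Gx Kx]; have [x' [Gx' xx' x'x]] := subgV sG Gx.
  exists x'; split=> //; split=> // y yi Gy yyi yiy.
  apply: (subgVr sK (Kx y yi Gy yyi yiy)); rewrite -(cnjM x x' yiy) xx'.
  exact: cnj_idf.
move=> g gi x Gg ggi gig [Gx Kx]; have Ggi := subgVr sG Gg ggi.
split; first exact: (subgM sG Gg (subgM sG Gx Ggi)).
move=> y yi Gy yyi yiy.
apply: (Kx (mulf y g) (mulf gi yi) (subgM sG Gy Gg)).
  apply: functional_extensionality => v.
  by rewrite /mulf (mulf_idf_cancel ggi) (mulf_idf_cancel yyi).
apply: functional_extensionality => v.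
by rewrite /mulf (mulf_idf_cancel yiy) (mulf_idf_cancel gig).
Qed.

Variable rho : aut -> aut.
Hypotheses (rhoM : forall x y, K x -> K y -> rho (mulf x y) = mulf (rho x) (rho y))
           (rho1 : rho idf = idf).

Lemma kernel_subgroup : subgroup_of G (kernel K rho).
Proof.
split=> [x [/(subg_sub sK)] //||x y [Kx rx] [Ky ry]|x [Kx rx]].
- by split; [exact: (subg1 sK) | exact: rho1].
- by split; [exact: (subgM sK) | rewrite rhoM // rx ry].
have [x' [Kx' xx' x'x]] := subgV sK Kx.
exists x'; split=> //; split=> //.
by have := rhoM Kx Kx'; rewrite xx' rho1 rx => /esym.
Qed.

Hypotheses (rho_comm : forall x y, K x -> K y -> mulf (rho x) (rho y) = mulf (rho y) (rho x))
           (core_kernel_trivial : forall x, core G (kernel K rho) x -> x = idf).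

(* [x1 x2 (x2 x1)^-1] lies in the core of ker rho, because rho has abelian image. *)
Lemma core_abelian x1 x2 : core G K x1 -> core G K x2 -> mulf x1 x2 = mulf x2 x1.
Proof.
move=> cx1 cx2; have [[Gx1 Kx1] [Gx2 Kx2]] := (cx1, cx2).
have [b' [Gb' bb' b'b]] := subgV sG (subgM sG Gx2 Gx1).
suff ab'1 : mulf (mulf x1 x2) b' = idf.
  apply: functional_extensionality => v.
  by have := equal_f ab'1 (x2 (x1 v)); rewrite /mulf (mulf_idf_cancel b'b).
apply: core_kernel_trivial; split; first exact: (subgM sG (subgM sG Gx1 Gx2) Gb').
move=> y yi Gy yyi yiy.
have [Kc1 Kc2] := (Kx1 y yi Gy yyi yiy, Kx2 y yi Gy yyi yiy).
have Kc21 := subgM sK Kc2 Kc1.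
have c21b'E : mulf (mulf (cnj y yi x2) (cnj y yi x1)) (cnj y yi b') = idf.
  by rewrite -(cnjM x2 x1 yiy) -(cnjM (mulf x2 x1) b' yiy) bb' cnj_idf.
have Kb' : K (cnj y yi b') by exact: (subgVr sK Kc21 c21b'E).
rewrite (cnjM (mulf x1 x2) b' yiy) (cnjM x1 x2 yiy).
split; first exact: (subgM sK (subgM sK Kc1 Kc2) Kb').
rewrite (rhoM (subgM sK Kc1 Kc2) Kb') (rhoM Kc1 Kc2) (rho_comm Kc1 Kc2).
by rewrite -(rhoM Kc2 Kc1) -(rhoM Kc21 Kb') c21b'E rho1.
Qed.

End NormalCore.

Lemma core_finite_index_power m G K x : subgroup_of (is_aut m) G -> subgroup_of G K ->
  finite_index G K -> G x -> exists e, 0 < e /\ core G K (powf x e).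
Proof.
move=> sG sK [s cosets] Gx; exists (size s)`!; split=> [|]; first exact: fact_gt0.
split=> [|y yi Gy yyi yiy]; first exact: (subgX sG).
have Gcnj : G (cnj y yi x) by exact: (subgM sG Gy (subgM sG Gx (subgVr sG Gy yyi))).
have [d [d_gt0 d_le Kd]] := finite_index_power sG sK cosets Gcnj.
have d_dvd : d %| (size s)`! by rewrite dvdn_fact // d_gt0.
rewrite -cnj_powf // -(divnK d_dvd) mulnC powfM.
exact: (subgX sK).
Qed.

Definition centralizer (G S : aut -> Prop) : aut -> Prop :=
  fun x => G x /\ forall s, S s -> mulf x s = mulf s x.

Lemma centralizer_subgroup A G S : subgroup_of A G -> subgroup_of G (centralizer G S).
Proof.
move=> sG; split=> [x []//|||x [Gx cx]]; first by split=> //; exact: (subg1 sG).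
  move=> x y [Gx cx] [Gy cy]; split=> [|s Ss]; first exact: (subgM sG).
  by rewrite -[LHS]/(mulf x (mulf y s)) cy // -[LHS]/(mulf (mulf x s) y) cx.
have [x' [Gx' xx' x'x]] := subgV sG Gx; exists x'; split=> //; split=> // s Ss.
apply: functional_extensionality => v; rewrite /mulf.
rewrite -{1}[v](mulf_idf_cancel xx') -[s (x (x' v))]/(mulf s x (x' v)) -(cx s Ss).
by rewrite /mulf (mulf_idf_cancel x'x).
Qed.

Lemma cyclic_sub_powf G g n : cyclic_sub G g (powf g n).
Proof. by move=> H sH gH; exact: (subgX sH n (gH g erefl)). Qed.

Lemma cyclic_sub_abelian A G g h1 h2 : subgroup_of A G -> G g ->
  cyclic_sub G g h1 -> cyclic_sub G g h2 -> mulf h1 h2 = mulf h2 h1.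
Proof.
move=> sG Gg cyc_h1 cyc_h2; have sC S := centralizer_subgroup S sG.
have g_central h : cyclic_sub G g h -> mulf g h = mulf h g.
  move=> cyc_h; suff [_ ch] : centralizer G (eq g) h by exact/esym/ch.
  by apply: cyc_h (sC _) _ => _ ->; split=> // _ <-.
suff [_ ch1] : centralizer G (cyclic_sub G g) h1 by exact: ch1.
by apply: cyc_h1 (sC _) _ => _ ->; split.
Qed.

Lemma cyclic_sub_finite_order A G g n h : subgroup_of A G -> G g -> 0 < n -> powf g n = idf ->
  cyclic_sub G g h -> exists i, h = powf g i.
Proof.
move=> sG Gg n_gt0 gn cyc_h.
apply: (cyc_h (fun x => exists i, x = powf g i)); last by move=> _ ->; exists 1.
split=> [_ [i ->]|||_ [i ->]]; [exact: (subgX sG) | by exists 0 | |].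
  by move=> _ _ [i ->] [j ->]; exists (i + j); rewrite powfD.
exists (powf g (i * n.-1)); split; first by exists (i * n.-1).
  exact: powf_mulV.
by rewrite powfC; exact: powf_mulV.
Qed.

Lemma VRC_torsion m G : subgroup_of (is_aut m) G -> branch m G -> just_infinite G ->
  VRC G -> torsion G.
Proof.
move=> sG branchG [G_infinite G_just_infinite] vrc g Gg; apply: NNPP => g_inf.
have g_pow_neq1 d : 0 < d -> powf g d <> idf by move=> d_gt0 gd; apply: g_inf; exists d.
have [K [sK K_fi _ [rho [rhoK rhoM rho_id]]]] := vrc g Gg.
have rho1 : rho idf = idf := rho_id _ (cyclic_sub_powf 0).
have N_normal := core_normal sG (kernel_subgroup sK rhoM rho1).
case: (classic (exists x, core G (kernel K rho) x /\ x <> idf)) => [N_nontrivial | N_trivial].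
  have [s cosets] := G_just_infinite _ N_normal N_nontrivial.
  have [d [d_gt0 _ /(core_sub sG) [_]]] := finite_index_power sG (proj1 N_normal) cosets Gg.
  by rewrite rho_id; [exact: g_pow_neq1 | exact: cyclic_sub_powf].
have [e [e_gt0 core_ge]] := core_finite_index_power sG sK K_fi Gg.
apply: (g_pow_neq1 e e_gt0).
apply: (branch_abelian_normal_trivial sG (core_normal sG sK) _ branchG G_infinite core_ge).
apply: (core_abelian sG sK rhoM rho1).
  by move=> x y Kx Ky; exact: (cyclic_sub_abelian sG Gg (rhoK _ Kx) (rhoK _ Ky)).
by move=> x Nx; apply: NNPP => x_neq1; apply: N_trivial; exists x.
Qed.

Lemma aut_moves_level m f v L : (forall i, 0 < m i) -> is_aut m f ->
  vertex m v -> f v <> v -> size v <= L -> exists z, [/\ vertex m z, size z = L & f z <> z].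
Proof.
move=> m_gt0 af vv fv v_le; pose z := v ++ nseq (L - size v) 0.
have vz : vertex m z.
  by move=> i _; rewrite nth_cat nth_nseq if_same; case: ifP => [/vv|_].
exists z; split=> //; first by rewrite size_cat size_nseq subnKC.
by move=> fz; apply: fv; have := aut_take af (size v) vz; rewrite fz !take_size_cat.
Qed.

Lemma level_detects m (F : nat -> aut) n : (forall i, 0 < m i) -> (forall d, is_aut m (F d)) ->
  exists N, forall d, d < n -> F d <> idf -> exists z, [/\ vertex m z, size z = N & F d z <> z].
Proof.
move=> m_gt0 aF; elim: n => [|n [N IH]]; first by exists 0.
case: (classic (F n = idf)) => [Fn1 | Fn_neq1].
  exists N => d; rewrite ltnS leq_eqVlt => /orP [/eqP -> //|]; exact: IH.
have [v [vv Fnv]] := aut_moves (aF n) Fn_neq1.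
exists (maxn N (size v)) => d; rewrite ltnS leq_eqVlt => /orP [/eqP -> _|/IH d_lt /d_lt].
  by apply: (aut_moves_level m_gt0 (aF n) vv Fnv); exact: leq_maxr.
move=> [z [vz <- Fdz]]; apply: (aut_moves_level m_gt0 (aF d) vz Fdz); exact: leq_maxl.
Qed.

Fixpoint tuples (T : eqType) (s : seq T) k : seq (seq T) :=
  if k is k'.+1 then [seq x :: t | x <- s, t <- tuples s k'] else [:: [::]].

Lemma mem_tuples (T : eqType) (s : seq T) k t : size t = k -> {subset t <= s} -> t \in tuples s k.
Proof.
elim: k t => [|k IH] [|x t] //= [size_t] ts.
apply: allpairs_f; first by apply: ts; exact: mem_head.
by apply: IH => // y yt; apply: ts; rewrite inE yt orbT.
Qed.

Lemma size_tuples (T : eqType) (s : seq T) k t : t \in tuples s k -> size t = k.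
Proof.
elim: k t => [|k IH] t /=; first by rewrite inE => /eqP ->.
by case/allpairsP => [[x t'] [/= _ t'_in ->]] /=; rewrite (IH _ t'_in).
Qed.

Lemma mem_In (T : eqType) (x : T) s : x \in s -> List.In x s.
Proof. by elim: s => [|y s IH] //=; rewrite inE => /orP [/eqP ->|/IH]; [left | right]. Qed.

Lemma finite_index_fibers A G H (T : eqType) (phi : aut -> T) (C : seq T) :
  subgroup_of A G -> (forall g, G g -> phi g \in C) ->
  (forall x x' g, G x' -> G g -> mulf x' x = idf -> phi x = phi g -> H (mulf x' g)) ->
  finite_index G H.
Proof.
move=> sG phiC fibers.
pose rep c := epsilon (inhabits idf) (fun x => G x /\ phi x = c).
exists (map rep C) => g Gg.
have [Gx phix] : G (rep (phi g)) /\ phi (rep (phi g)) = phi g.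
  by apply: (epsilon_spec (inhabits idf) (fun x => G x /\ phi x = phi g)); exists g.
have [x' [Gx' xx' x'x]] := subgV sG Gx.
exists (rep (phi g)); first exact/List.in_map/mem_In/phiC.
exists (mulf x' g); split; first exact: (fibers _ _ _ Gx' Gg x'x phix).
by apply: functional_extensionality => v; rewrite /mulf (mulf_idf_cancel xx').
Qed.

Definition level_stab m (G : aut -> Prop) N : aut -> Prop :=
  fun k => G k /\ forall z, vertex m z -> size z = N -> k z = z.

(* The coset of g is determined by [map g W], which ranges over the finite [tuples W (size W)]. *)
Lemma level_stab_finite_index m G N : subgroup_of (is_aut m) G -> finite_index G (level_stab m G N).
Proof.
move=> sG; pose W := tuples (iota 0 (\max_(i < N) m i)) N.
have W_level z : vertex m z -> size z = N -> z \in W.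
  move=> vz size_z; apply: mem_tuples => // _ /(nthP 0) [i i_lt <-].
  rewrite mem_iota add0n /=; apply: leq_trans (vz i i_lt) _.
  rewrite size_z in i_lt; exact: (leq_bigmax (Ordinal i_lt)).
apply: (finite_index_fibers (phi := fun g => map g W) (C := tuples W (size W)) sG).
  move=> g Gg; have ag := subg_sub sG Gg; apply: mem_tuples; first by rewrite size_map.
  move=> _ /mapP [z zW ->]; case: (classic (vertex m z)) => [vz|/(aut_fix ag) -> //].
  by apply: W_level; [apply: (aut_vertex ag) | rewrite -(size_tuples zW); exact: (aut_size ag z)].
move=> x x' g Gx' Gg x'x /esym/eq_in_map gx; split=> [|z vz size_z]; first exact: (subgM sG Gx' Gg).
by rewrite /mulf gx ?W_level // (mulf_idf_cancel x'x).
Qed.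

Section FiniteOrderRetract.

Variables (m : nat -> nat) (G : aut -> Prop) (g : aut) (n N : nat).
Hypotheses (sG : subgroup_of (is_aut m) G) (Gg : G g) (n_gt0 : 0 < n) (gn : powf g n = idf).
Hypothesis N_detects : forall d, d < n -> powf g d <> idf ->
  exists z, [/\ vertex m z, size z = N & powf g d z <> z].

Let aut_powf i : is_aut m (powf g i) := subg_sub sG (subgX sG i Gg).

Definition agrees_on_level i (k : aut) := forall z, vertex m z -> size z = N -> k z = powf g i z.

Lemma powf_eq_on_level a b :
  (forall z, vertex m z -> size z = N -> powf g a z = powf g b z) -> powf g a = powf g b.
Proof.
rewrite (powf_mod a gn) (powf_mod b gn).
move: (ltn_pmod a n_gt0) (ltn_pmod b n_gt0); move: (a %% n) (b %% n) => {}a {}b.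
wlog a_le_b : a b / a <= b => [wlog_ab a_lt b_lt ab|a_lt b_lt ab].
  case: (leqP a b) => [/wlog_ab|/ltnW /wlog_ab ba]; first exact.
  by apply/esym/ba => // z vz size_z; rewrite ab.
rewrite -(subnKC a_le_b) powfD; case: (classic (powf g (b - a) = idf)) => [-> //|gba_neq1].
have [z [vz size_z gba_z]] := N_detects (leq_ltn_trans (leq_subr a b) b_lt) gba_neq1.
case: gba_z; apply: (aut_inj (aut_powf a)).
by rewrite -[LHS]/(mulf (powf g a) (powf g (b - a)) z) -powfD subnKC // ab.
Qed.

Lemma agrees_on_levelM i j x y :
  agrees_on_level i x -> agrees_on_level j y -> agrees_on_level (i + j) (mulf x y).
Proof.
move=> xi yj z vz size_z; rewrite /mulf yj // xi ?powfD //; first exact: (aut_vertex (aut_powf j)).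
by rewrite (aut_size (aut_powf j)).
Qed.

Definition acts_as_power_on_level (k : aut) := G k /\ exists i, agrees_on_level i k.

Definition level_exponent (k : aut) := epsilon (inhabits 0) (agrees_on_level^~ k).

Lemma level_exponentP k : acts_as_power_on_level k -> agrees_on_level (level_exponent k) k.
Proof. by case=> _; exact: epsilon_spec. Qed.

Lemma acts_as_power_on_level_subgroup : subgroup_of G acts_as_power_on_level.
Proof.
split=> [k []//|||k [Gk [i ki]]]; first by split; [exact: (subg1 sG) | exists 0].
  move=> x y [Gx [i xi]] [Gy [j yj]]; split; first exact: (subgM sG).
  by exists (i + j); exact: agrees_on_levelM.
have [k' [Gk' kk' k'k]] := subgV sG Gk; exists k'; split=> //; split=> //.
exists (i * n.-1) => z vz size_z; have ak' := subg_sub sG Gk'.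
have zE : z = powf g i (k' z).
  by rewrite -ki ?(mulf_idf_cancel kk') ?(aut_size ak') //; exact: (aut_vertex ak' vz).
by rewrite {2}zE; have := powf_mulV i n_gt0 gn; rewrite powfC => /mulf_idf_cancel ->.
Qed.

Lemma acts_as_power_on_level_finite_index : finite_index G acts_as_power_on_level.
Proof.
have [s cosets] := level_stab_finite_index N sG; exists s => k Gk.
have [x sx [h [[Gh h_fix] ->]]] := cosets k Gk.
by exists x => //; exists h; split=> //; split=> //; exists 0.
Qed.

Lemma cyclic_sub_acts_as_power h : cyclic_sub G g h -> acts_as_power_on_level h.
Proof.
move=> /(cyclic_sub_finite_order sG Gg n_gt0 gn) [i ->].
by split; [exact: (subgX sG) | exists i].
Qed.

Let rho k := powf g (level_exponent k).

Lemma level_retractionM x y : acts_as_power_on_level x -> acts_as_power_on_level y ->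
  rho (mulf x y) = mulf (rho x) (rho y).
Proof.
move=> Kx Ky; have Kxy := subgM acts_as_power_on_level_subgroup Kx Ky.
rewrite /rho -powfD; apply: powf_eq_on_level => z vz size_z.
by rewrite -(level_exponentP Kxy) // (agrees_on_levelM (level_exponentP Kx) (level_exponentP Ky)).
Qed.

Lemma level_retraction_id h : cyclic_sub G g h -> rho h = h.
Proof.
move=> cyc_h; have Kh := cyclic_sub_acts_as_power cyc_h.
have [i hE] := cyclic_sub_finite_order sG Gg n_gt0 gn cyc_h; subst h.
by apply: powf_eq_on_level => z vz size_z; rewrite -(level_exponentP Kh).
Qed.

Lemma finite_order_virtual_retract : virtual_retract G (cyclic_sub G g).
Proof.
exists acts_as_power_on_level; split.
- exact: acts_as_power_on_level_subgroup.
- exact: acts_as_power_on_level_finite_index.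
- exact: cyclic_sub_acts_as_power.
exists rho; split=> [k _||]; first exact: cyclic_sub_powf.
  exact: level_retractionM.
exact: level_retraction_id.
Qed.

End FiniteOrderRetract.

Lemma torsion_VRC m G : (forall i, 0 < m i) -> subgroup_of (is_aut m) G -> torsion G -> VRC G.
Proof.
move=> m_gt0 sG torsionG g Gg; have [n [n_gt0 gn]] := torsionG g Gg.
have aut_powf d : is_aut m (powf g d) := subg_sub sG (subgX sG d Gg).
have [N N_detects] := level_detects n m_gt0 aut_powf.
exact: (finite_order_virtual_retract sG Gg n_gt0 gn N_detects).
Qed.

Theorem lemma3p8 (m : nat -> nat) (G : aut -> Prop) :
  (forall i, 2 <= m i) ->
  subgroup_of (is_aut m) G ->
  branch m G ->
  just_infinite G ->
  (VRC G <-> torsion G).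
Proof.
move=> m_ge2 sG branchG G_just_infinite; split.
  exact: (VRC_torsion sG branchG G_just_infinite).
have m_gt0 i : 0 < m i by apply: leq_trans (m_ge2 i).
exact: (torsion_VRC m_gt0 sG).
Qed.
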